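(* Let $b\in\mathcal S(\kappa,R,\lambda)$ with $\kappa>0$, $R,\lambda\ge0$. For $\varsigma\in\mathcal C([0,1],\mathbb R^n)$ with $\varsigma(0)=0$, $u\in L^\infty([0,1],\mathbb R^n)$ and $x_0\in\mathbb R^n$, let $x^{\varsigma,u}$ solve $x^{\varsigma,u}(t)=x_0+\int_0^tb(x^{\varsigma,u}(s))\,ds+\varsigma(t)+\int_0^tu(s)\,ds$, $t\in[0,1]$. Let $\eta<\frac12$ and $\bar R>0$. Then there is $M>0$ such that for each such $\varsigma$ and each $x_0\in\mathbb R^n$ there is a piecewise constant control $u\in L^\infty([0,1],\mathbb R^n)$ with $|u|_\infty+|\mathcal D_u|\le M$ such that $\mathrm{Leb}(\{t\in[0,1]:|x^{\varsigma,u}(t)|>\bar R\})\ge\eta$.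
   Context: $\mathcal S(\kappa,R,\lambda)$ is the set of Lipschitz $b:\mathbb R^n\to\mathbb R^n$ with $\langle b(x)-b(y),x-y\rangle\le-\kappa|x-y|^2$ if $|x|,|y|\ge R$ and $\le\lambda|x-y|^2$ otherwise. For a piecewise constant $u:[0,1]\to\mathbb R^n$, $\mathcal D_u\subset[0,1]$ is its finite set of discontinuities and $|\mathcal D_u|$ its cardinality. *)

From mathcomp Require Import all_boot all_order all_algebra.
From mathcomp Require Import all_classical all_reals all_analysis.
Set Implicit Arguments. Unset Strict Implicit. Unset Printing Implicit Defensive.
Import Order.TTheory GRing.Theory Num.Theory.
Import numFieldNormedType.Exports.
Local Open Scope classical_set_scope.
Local Open Scope ring_scope.

Section Defs.
Variables (R : realType) (n : nat).
Notation vec := 'rV[R]_n.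

Definition dotv (x y : vec) : R := \sum_(i < n) x ord0 i * y ord0 i.
Definition enorm (x : vec) : R := Num.sqrt (dotv x x).

Definition lipschitz (b : vec -> vec) : Prop :=
  exists L : R, forall x y, enorm (b x - b y) <= L * enorm (x - y).

Definition in_S (kappa R0 lambda : R) (b : vec -> vec) : Prop :=
  lipschitz b /\
  forall x y : vec,
    (R0 <= enorm x -> R0 <= enorm y ->
       dotv (b x - b y) (x - y) <= - kappa * enorm (x - y) ^+ 2) /\
    (~ (R0 <= enorm x /\ R0 <= enorm y) ->
       dotv (b x - b y) (x - y) <= lambda * enorm (x - y) ^+ 2).

Definition vint (f : R -> vec) (t : R) : vec :=
  \row_(i < n) Rintegral (@lebesgue_measure R) `[0, t] (fun s => f s ord0 i).

Definition solves (b : vec -> vec) (x0 : vec) (sigma u x : R -> vec) : Prop :=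
  {within `[0, 1], continuous x} /\
  forall t, 0 <= t <= 1 ->
    x t = x0 + vint (b \o x) t + sigma t + vint u t.

(* u is piecewise constant on [0,1] with discontinuity set exactly s:
   with p = 0 :: s ++ [:: 1] strictly increasing, u is constant on each
   [p_i, p_{i+1}) (and on the last closed piece [p_k-1, 1]), and the values
   on consecutive pieces differ (so each point of s is a genuine jump). *)
Definition piecewise_constant (u : R -> vec) (s : seq R) : Prop :=
  let p := 0 :: rcons s 1 in
  sorted <%R p /\
  (forall i : nat, (i < size s)%N ->
     forall t, nth 0 p i <= t < nth 0 p i.+1 -> u t = u (nth 0 p i)) /\
  (forall t, last 0 (0 :: s) <= t <= 1 -> u t = u (last 0 (0 :: s))) /\
  (forall i : nat, (i < size s)%N -> u (nth 0 p i) != u (nth 0 p i.+1)).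

End Defs.

(* Cut [0, 1] into N pieces of length 1/N, with
   N so large that n |L| / N <= 1/4, and use a bang-bang control +-c e_i0 whose
   sign on each piece is chosen greedily.  Two such controls that agree on the
   first k pieces produce the same solution up to the k-th grid point, because
   on a window of length 1/N the integral equation for the difference of two
   solutions is a contraction (Picard iteration halves the excess).  If the two
   signs differ on piece k, the control difference pushes the i0-th coordinates
   apart at rate 2c while the drift difference stays below rate c; after a delay
   3 Rbar / c one of the two solutions is thus outside the ball of radius Rbar,
   so one of the two signs keeps the solution outside for a time at least
   (1/N - 3 Rbar / c) / 2 on that piece.  Summing over the N pieces gives
   (1 - 3 Rbar N / c) / 2, which equals eta for c = 3 Rbar N / (1 - 2 eta). *)
From mathcomp Require Import all_boot all_order all_algebra.
From mathcomp Require Import all_classical all_reals all_analysis.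
From mathcomp Require Import ring lra measurable_realfun.
Import Order.TTheory GRing.Theory Num.Theory.
Import numFieldNormedType.Exports.
Local Open Scope classical_set_scope.
Local Open Scope ring_scope.
Set Implicit Arguments. Unset Strict Implicit. Unset Printing Implicit Defensive.

Section Norms.
Variables (R : realType) (n : nat).
Implicit Types y z : 'rV[R]_n.

Definition l1norm y : R := \sum_i `|y ord0 i|.

Lemma l1norm_ge0 y : 0 <= l1norm y.
Proof. by apply: sumr_ge0 => i _. Qed.

Lemma coord_le_l1norm y i : `|y ord0 i| <= l1norm y.
Proof. by rewrite /l1norm (bigD1 i) //= lerDl; apply: sumr_ge0 => j _. Qed.

Lemma dotv_ge0 y : 0 <= dotv y y.
Proof. by apply: sumr_ge0 => i _; rewrite -expr2 sqr_ge0. Qed.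

Lemma coord_le_enorm y i : `|y ord0 i| <= enorm y.
Proof.
rewrite /enorm -sqrtr_sqr ler_sqrt; last exact: dotv_ge0.
rewrite /dotv (bigD1 i) //= expr2 lerDl.
by apply: sumr_ge0 => j _; rewrite -expr2 sqr_ge0.
Qed.

Lemma enorm_le_l1norm y : enorm y <= l1norm y.
Proof.
rewrite /enorm -(ger0_norm (l1norm_ge0 y)) -sqrtr_sqr ler_sqrt; last exact: sqr_ge0.
rewrite expr2 {2}/l1norm mulr_sumr /dotv; apply: ler_sum => i _.
rewrite -[y ord0 i * y ord0 i]ger0_norm -?expr2 ?sqr_ge0 // normrX expr2.
by apply: ler_wpM2r => //; exact: coord_le_l1norm.
Qed.

Lemma coord_le_mxnorm y j : `|y ord0 j| <= `|y|.
Proof.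
rewrite [`|y|]mx_normrE.
exact: (le_bigmax _ (fun ij : 'I_1 * 'I_n => `|y ij.1 ij.2|) (ord0, j)).
Qed.

Lemma l1norm_le_mxnorm y : l1norm y <= n%:R * `|y|.
Proof.
have -> : n%:R * `|y| = \sum_(j < n) `|y| by rewrite sumr_const card_ord mulr_natl.
by apply: ler_sum => j _; exact: coord_le_mxnorm.
Qed.

Lemma eq_row_of_sum_dist_le0 y z : \sum_i `|y ord0 i - z ord0 i| <= 0 -> y = z.
Proof.
move=> yz; apply/rowP => j; apply/eqP; rewrite -subr_eq0 -normr_le0.
by apply: le_trans yz; rewrite (bigD1 j) //= lerDl; apply: sumr_ge0.
Qed.

Lemma enorm_scale_delta (i0 : 'I_n) (a : R) : enorm (a *: 'e_i0) = `|a|.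
Proof.
rewrite /enorm /dotv (bigD1 i0) //= big1 ?addr0; last first.
  by move=> j /negbTE ji; rewrite !mxE /= ji mulr0 mul0r.
by rewrite !mxE /= eqxx mulr1 -expr2 sqrtr_sqr.
Qed.

End Norms.

Section LipschitzCoord.
Variables (R : realType) (n : nat) (b : 'rV[R]_n -> 'rV[R]_n) (L : R).
Hypothesis hL : forall x y, enorm (b x - b y) <= L * enorm (x - y).

Lemma lipschitz_coord_l1 y z i :
  `|b y ord0 i - b z ord0 i| <= `|L| * l1norm (y - z).
Proof.
have -> : b y ord0 i - b z ord0 i = (b y - b z) ord0 i by rewrite !mxE.
apply: (le_trans (coord_le_enorm _ _)); apply: (le_trans (hL _ _)).
apply: (le_trans (ler_norm _)); rewrite normrM.
apply: ler_wpM2l => //; rewrite ger0_norm; last exact: sqrtr_ge0.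
exact: enorm_le_l1norm.
Qed.

Lemma continuous_lipschitz_coord i : continuous (fun y => b y ord0 i).
Proof.
move=> y; apply/(@cvgrPdist_lt _ _ _ (nbhs y) (nbhs_filter y)) => e e0.
have hK : 0 < (`|L| + 1) * (n%:R + 1) by apply: mulr_gt0; rewrite ltr_wpDl.
near=> z.
apply: (le_lt_trans (lipschitz_coord_l1 y z i)).
apply: (le_lt_trans (ler_wpM2l (normr_ge0 L) (l1norm_le_mxnorm (y - z)))).
have hz : `|y - z| < e / ((`|L| + 1) * (n%:R + 1)).
  near: z; apply: (@cvgr_dist_lt _ _ _ (nbhs y) (nbhs_filter y) id y) => //.
  by rewrite divr_gt0.
rewrite ltr_pdivlMr // in hz; apply: le_lt_trans hz.
rewrite mulrA mulrC mulrA -mulrA; apply: ler_wpM2l => //.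
by apply: ler_pM => //; rewrite lerDl.
Unshelve. all: by end_near.
Qed.

End LipschitzCoord.

Section IntervalIntegrals.
Variable R : realType.
Notation mu := (@lebesgue_measure R).

Lemma lebesgue_itv_cc_lty (a b : R) : (mu `[a, b] < +oo)%E.
Proof. by rewrite lebesgue_measure_itv /=; case: ifP => _; rewrite ?ltry // -EFinD ltry. Qed.

Lemma integrable_cst_itv_cc (a b C : R) : mu.-integrable `[a, b] (EFin \o cst C).
Proof.
apply: measurable_bounded_integrable => //; first exact: lebesgue_itv_cc_lty.
exact: bounded_cst.
Qed.

Lemma integrable_itv_sub01 (f : R -> R) t : 0 <= t <= 1 ->
  mu.-integrable `[0, 1] (EFin \o f) -> mu.-integrable `[0, t] (EFin \o f).
Proof.
move=> /andP[_ t1] hf; apply: integrableS hf => //.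
by apply: subset_itvl; rewrite bnd_simp.
Qed.

Lemma integrable_subr (D : set R) (f g : R -> R) : measurable D ->
  mu.-integrable D (EFin \o f) -> mu.-integrable D (EFin \o g) ->
  mu.-integrable D (EFin \o (fun s => f s - g s)).
Proof.
move=> mD hf hg.
have -> : EFin \o (fun s => f s - g s) = ((EFin \o f) \- (EFin \o g))%E.
  by apply/funext => s /=; rewrite EFinB.
exact: integrableB.
Qed.

Lemma Rintegral_cst_itv_cc (a b C : R) : a <= b ->
  Rintegral mu `[a, b] (fun _ => C) = C * (b - a).
Proof.
move=> ab; rewrite Rintegral_cst //= lebesgue_measure_itv /= lte_fin.
case: ltP => //= ba.
have -> : b = a by apply/eqP; rewrite eq_le ab ba.
by rewrite subrr.
Qed.

Lemma Rintegral_itv_cc_split_co (f : R -> R) (a m t : R) : a <= m <= t ->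
  mu.-integrable `[a, t] (EFin \o f) ->
  Rintegral mu `[a, t] f = Rintegral mu `[a, m[ f + Rintegral mu `[m, t] f.
Proof.
move=> /andP[am mt] hf.
rewrite (@itv_bndbnd_setU _ _ _ (BLeft m)) ?bnd_simp // Rintegral_setU //.
- by rewrite -(@itv_bndbnd_setU _ _ _ (BLeft m)) ?bnd_simp.
- apply/disj_setPS => x [] /=; rewrite !in_itv /= => /andP[_ xm] /andP[mx _].
  by move: (lt_le_trans xm mx); rewrite ltxx.
Qed.

Lemma Rintegral_itv_cc_split_oc (f : R -> R) (a m t : R) : a <= m <= t ->
  mu.-integrable `[a, t] (EFin \o f) ->
  Rintegral mu `[a, t] f = Rintegral mu `[a, m] f + Rintegral mu `]m, t] f.
Proof.
move=> /andP[am mt] hf.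
rewrite (@itv_bndbnd_setU _ _ _ (BRight m)) ?bnd_simp // Rintegral_setU //.
- by rewrite -(@itv_bndbnd_setU _ _ _ (BRight m)) ?bnd_simp.
- apply/disj_setPS => x [] /=; rewrite !in_itv /= => /andP[_ xm] /andP[mx _].
  by move: (lt_le_trans mx xm); rewrite ltxx.
Qed.

Lemma Rintegral_norm_itv_mono (f : R -> R) (a t b : R) : a <= t <= b ->
  mu.-integrable `[a, b] (EFin \o f) ->
  Rintegral mu `[a, t] (fun s => `|f s|) <= Rintegral mu `[a, b] (fun s => `|f s|).
Proof.
move=> atb hf.
rewrite (@Rintegral_itv_cc_split_oc (fun s => `|f s|) a t b) //; last exact: integrable_norm.
by rewrite lerDl; apply: Rintegral_ge0 => x _.
Qed.

Lemma norm_Rintegral_vanishing_before (g : R -> R) (a t C : R) : 0 <= a <= t ->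
  mu.-integrable `[0, t] (EFin \o g) ->
  (forall s, 0 <= s -> s < a -> g s = 0) ->
  (forall s, a <= s <= t -> `|g s| <= C) ->
  `|Rintegral mu `[0, t] g| <= C * (t - a).
Proof.
move=> /andP[a0 at_] hg g0 gC.
have hgt : mu.-integrable `[a, t] (EFin \o (fun s => `|g s|)).
  by apply: integrable_norm; apply: integrableS hg => //; apply: subset_itvr; rewrite bnd_simp.
apply: (le_trans (le_normr_Rintegral _ _)) => //.
rewrite (@Rintegral_itv_cc_split_co (fun s => `|g s|) 0 a t) ?a0 //; last exact: integrable_norm.
have -> : Rintegral mu `[0, a[ (fun s => `|g s|) = 0.
  rewrite (@eq_Rintegral _ _ _ mu _ (fun _ => 0)); first by rewrite Rintegral_cst // mul0r.
  by move=> s; rewrite inE /= in_itv /= => /andP[s0 sa]; rewrite g0 // normr0.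
rewrite add0r -Rintegral_cst_itv_cc //.
by apply: le_Rintegral => //; exact: integrable_cst_itv_cc.
Qed.

End IntervalIntegrals.

Lemma ler_of_add_halves (R : archiRealFieldType) (y c B : R) : 0 <= B ->
  (forall m : nat, y <= c + B / 2 ^+ m) -> y <= c.
Proof.
move=> B0 H; apply/ler_addgt0Pr => e e0.
have /archi_boundP := divr_ge0 B0 (ltW e0).
set m := Num.Def.archi_bound _ => hm.
apply: (le_trans (H m)); rewrite lerD2l ler_pdivrMr ?exprn_gt0 //.
rewrite ltr_pdivrMr // in hm; apply: (ltW (lt_le_trans hm _)).
rewrite mulrC ler_wpM2l ?(ltW e0) // -natrX ler_nat.
exact: ltnW (ltn_expl _ _).
Qed.

(* D models the difference of two solutions: g is the difference of the drifts,
   which the Lipschitz bound controls by D itself, and v the difference of the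
   control integrals. *)
Section ShortWindow.
Variables (R : realType) (n : nat) (K V a h : R) (D g v : 'I_n -> R -> R).
Notation mu := (@lebesgue_measure R).
Hypotheses (K0 : 0 <= K) (a0 : 0 <= a) (V0 : 0 <= V) (hKh : n%:R * K * h <= 1 / 2).
Hypothesis gint : forall i, mu.-integrable `[0, 1] (EFin \o g i).
Hypothesis hD : forall i (t : R), 0 <= t <= 1 -> D i t = Rintegral mu `[0, t] (g i) + v i t.
Hypothesis hg : forall i (s : R), 0 <= s <= 1 -> `|g i s| <= K * \sum_j `|D j s|.
Hypothesis hD0 : forall (s : R) j, 0 <= s -> s < a -> D j s = 0.
Hypothesis hv : forall t, a <= t < a + h -> t <= 1 -> \sum_i `|v i t| <= V.

Lemma window_bound_init t : a <= t < a + h -> t <= 1 ->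
  \sum_i `|D i t| <= \sum_i Rintegral mu `[0, 1] (fun s => `|g i s|) + V.
Proof.
move=> ht t1; have t01 : 0 <= t <= 1 by rewrite t1 (le_trans a0) //; case/andP: ht.
apply: (le_trans _ (lerD (lexx _) (hv ht t1))); rewrite -big_split /=.
apply: ler_sum => i _; rewrite hD //.
apply: (le_trans (ler_normD _ _)); apply: lerD => //.
apply: (le_trans (le_normr_Rintegral _ _)) => //; first exact: integrable_itv_sub01.
exact: Rintegral_norm_itv_mono (gint i).
Qed.

Lemma window_bound_halve (Q : R) : 0 <= Q ->
  (forall t, a <= t < a + h -> t <= 1 -> \sum_i `|D i t| <= Q) ->
  forall t, a <= t < a + h -> t <= 1 -> \sum_i `|D i t| <= Q / 2 + V.
Proof.
move=> Q0 hQ t /andP[at_ th] t1.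
have t01 : 0 <= t <= 1 by rewrite t1 (le_trans a0 at_).
apply: (@le_trans _ _ (\sum_(i < n) (K * Q * (t - a) + `|v i t|))).
  apply: ler_sum => i _; rewrite hD //.
  apply: (le_trans (ler_normD _ _)); apply: lerD => //.
  apply: norm_Rintegral_vanishing_before; first by rewrite a0.
  - exact: integrable_itv_sub01.
  - move=> s s0 sa; apply/eqP; rewrite -normr_le0.
    have s01 : 0 <= s <= 1 by rewrite s0 (le_trans (ltW sa)) // (le_trans at_).
    have := hg i s01; rewrite big1 ?mulr0 //.
    by move=> j _; rewrite hD0 // normr0.
  - move=> s /andP[sa st]; apply: (le_trans (@hg i s _)).
      by rewrite (le_trans a0 sa) (le_trans st).
    apply: ler_wpM2l => //; apply: hQ; last exact: (le_trans st).
    by rewrite sa (le_lt_trans st th).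
rewrite big_split /= sumr_const card_ord -[_ *+ n]mulr_natl.
have hKQ : n%:R * (K * Q * (t - a)) <= Q / 2.
  have -> : n%:R * (K * Q * (t - a)) = (n%:R * K * (t - a)) * Q by ring.
  rewrite [Q / 2]mulrC; apply: ler_wpM2r => //.
  apply: (le_trans _ (le_trans hKh _)); last by rewrite mul1r.
  apply: ler_wpM2l; first by rewrite mulr_ge0.
  by rewrite lerBlDl ltW.
by apply: lerD => //; apply: hv => //; rewrite at_ th.
Qed.

Lemma window_bound t : a <= t < a + h -> t <= 1 -> \sum_i `|D i t| <= 2 * V.
Proof.
set B := \sum_i Rintegral mu `[0, 1] (fun s => `|g i s|) + V.
have B0 : 0 <= B.
  by apply: addr_ge0 => //; apply: sumr_ge0 => i _; apply: Rintegral_ge0.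
suff H m : forall t, a <= t < a + h -> t <= 1 -> \sum_i `|D i t| <= 2 * V + B / 2 ^+ m.
  by move=> ht t1; apply: (ler_of_add_halves B0) => m; exact: H.
elim: m => [|m IH] s hs s1.
  rewrite expr0 divr1; apply: (le_trans (window_bound_init hs s1)).
  by rewrite lerDr mulr_ge0.
have Q0 : 0 <= 2 * V + B / 2 ^+ m by rewrite addr_ge0 ?mulr_ge0 ?divr_ge0 ?exprn_ge0.
have -> : 2 * V + B / 2 ^+ m.+1 = (2 * V + B / 2 ^+ m) / 2 + V by rewrite exprS; field.
exact: window_bound_halve Q0 IH s hs s1.
Qed.

End ShortWindow.

Section Comparison.
Variables (R : realType) (n : nat) (b : 'rV[R]_n -> 'rV[R]_n) (L : R).
Hypothesis hL : forall x y, enorm (b x - b y) <= L * enorm (x - y).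
Variables (x0 : 'rV[R]_n) (sigma : R -> 'rV[R]_n).
Notation mu := (@lebesgue_measure R).

Lemma integrable_solution_drift u x : solves b x0 sigma u x ->
  forall i, mu.-integrable `[0, 1] (EFin \o (fun s => b (x s) ord0 i)).
Proof.
move=> [hx _] i; apply: continuous_compact_integrable; first exact: segment_compact.
apply: (@within_continuous_comp _ _ _ _ x (fun M : 'rV[R]_n => b M ord0 i)) => //.
by move=> M _; exact: (continuous_lipschitz_coord hL).
Qed.

Lemma solution_coord_diff u1 u2 x y : solves b x0 sigma u1 x -> solves b x0 sigma u2 y ->
  forall i t, 0 <= t <= 1 ->
  x t ord0 i - y t ord0 i =
    Rintegral mu `[0, t] (fun s => b (x s) ord0 i - b (y s) ord0 i) +
    (Rintegral mu `[0, t] (fun s => u1 s ord0 i) - Rintegral mu `[0, t] (fun s => u2 s ord0 i)).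
Proof.
move=> sx sy i t ht.
rewrite (sx.2 t ht) (sy.2 t ht) /vint !mxE /= RintegralB //; last 2 first.
- exact: integrable_itv_sub01 (integrable_solution_drift sx i).
- exact: integrable_itv_sub01 (integrable_solution_drift sy i).
ring.
Qed.

Lemma solutions_close_on_window u1 u2 x y a h V :
  solves b x0 sigma u1 x -> solves b x0 sigma u2 y ->
  n%:R * `|L| * h <= 1 / 2 -> 0 <= a -> 0 <= V ->
  (forall s, 0 <= s -> s < a -> x s = y s) ->
  (forall t, a <= t < a + h -> t <= 1 ->
     \sum_i `|Rintegral mu `[0, t] (fun s => u1 s ord0 i) -
               Rintegral mu `[0, t] (fun s => u2 s ord0 i)| <= V) ->
  forall t, a <= t < a + h -> t <= 1 -> \sum_i `|x t ord0 i - y t ord0 i| <= 2 * V.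
Proof.
move=> sx sy hKh a0 V0 hxy hv.
apply: (@window_bound R n `|L| V a h (fun i t => x t ord0 i - y t ord0 i)
  (fun i s => b (x s) ord0 i - b (y s) ord0 i)
  (fun i t => Rintegral mu `[0, t] (fun s => u1 s ord0 i) -
              Rintegral mu `[0, t] (fun s => u2 s ord0 i))) => //.
- move=> i; apply: integrable_subr => //.
  + exact: integrable_solution_drift sx i.
  + exact: integrable_solution_drift sy i.
- by move=> i t ht; exact: solution_coord_diff.
- move=> i s _; apply: (le_trans (lipschitz_coord_l1 hL (x s) (y s) i)).
  by rewrite /l1norm ler_wpM2l //; apply: ler_sum => j _; rewrite !mxE.
- by move=> s j s0 sa; rewrite hxy // subrr.
Qed.

End Comparison.

Section ExitSets.
Variables (R : realType) (n : nat).
Implicit Types x : R -> 'rV[R]_n.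

Definition exit_set (Rb : R) x : set R := [set t | (0 <= t <= 1) /\ Rb < enorm (x t)].

Lemma measurable_coord x (i : 'I_n) : {within `[0, 1], continuous x} ->
  measurable_fun (`[0, 1] : set R) (fun t => x t ord0 i).
Proof.
move=> hx; apply: subspace_continuous_measurable_fun => //.
apply: (@within_continuous_comp _ _ _ _ x (fun M : 'rV[R]_n => M ord0 i)) => //.
by move=> M _; exact: coord_continuous.
Qed.

Lemma measurable_coord_exit x (i : 'I_n) (lo hi Rb : R) : {within `[0, 1], continuous x} ->
  0 <= lo -> hi <= 1 -> measurable [set t | (lo <= t < hi) /\ Rb < `|x t ord0 i|].
Proof.
move=> hx lo0 hi1.
have mf01 : measurable_fun (`[0, 1] : set R) (fun t => `|x t ord0 i|).
  by apply: measurableT_comp; [exact: normr_measurable | exact: measurable_coord].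
have mf : measurable_fun (`[lo, hi[ : set R) (fun t => `|x t ord0 i|).
  apply: (measurable_funS _ _ mf01) => // t /=; rewrite !in_itv /= => /andP[lt th].
  by rewrite (le_trans lo0 lt) (le_trans (ltW th) hi1).
have := mf (measurable_itv _) _ (measurable_itv `]Rb, +oo[).
by congr measurable; apply/seteqP; split => t /=; rewrite !in_itv /= andbT => -[].
Qed.

Lemma measurable_exit_set x Rb : {within `[0, 1], continuous x} -> measurable (exit_set Rb x).
Proof.
move=> hx.
have mf : measurable_fun (`[0, 1] : set R) (fun t => enorm (x t)).
  apply: (measurableT_comp (continuous_measurable_fun (@sqrt_continuous R))).
  by apply: measurable_sum => i; apply: measurable_funM; exact: measurable_coord.
have := mf (measurable_itv _) _ (measurable_itv `]Rb, +oo[).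
by congr measurable; apply/seteqP; split => t /=; rewrite !in_itv /= andbT => -[].
Qed.

End ExitSets.

Section BangBang.
Variables (R : realType) (n : nat) (i0 : 'I_n) (Np : nat) (c : R).
Local Notation N := Np.+1.
Notation mu := (@lebesgue_measure R).

Definition grid (j : nat) : R := j%:R / N%:R.

(* The offset 3 on odd pieces makes consecutive values distinct whatever the
   signs, so every interior grid point is a genuine jump of the control. *)
Definition step_value (tau : nat -> bool) (k : nat) : R :=
  (if tau k then 1 else -1) + (if odd k then 3 else 0).

(* Written as a sum of jumps so that its measurability is immediate. *)
Definition step_fun (tau : nat -> bool) (t : R) : R :=
  step_value tau 0 +
  \sum_(0 <= j < Np) (grid j.+1 <= t)%R%:R * (step_value tau j.+1 - step_value tau j).

Definition control (tau : nat -> bool) (t : R) : 'rV[R]_n := (c * step_fun tau t) *: 'e_i0.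

Definition grid_jumps : seq R := [seq grid j | j <- iota 1 Np].

Lemma grid_le j k : (j <= k)%N -> grid j <= grid k.
Proof. by move=> jk; rewrite /grid ler_pM2r ?invr_gt0 ?ltr0n // ler_nat. Qed.

Lemma grid_lt j k : (j < k)%N -> grid j < grid k.
Proof. by move=> jk; rewrite /grid ltr_pM2r ?invr_gt0 ?ltr0n // ltr_nat. Qed.

Lemma grid0 : grid 0 = 0. Proof. by rewrite /grid mul0r. Qed.

Lemma gridN : grid N = 1. Proof. by rewrite /grid divff // pnatr_eq0. Qed.

Lemma grid_ge0 k : 0 <= grid k.
Proof. by rewrite -grid0; exact: grid_le. Qed.

Lemma grid_le1 k : (k <= N)%N -> grid k <= 1.
Proof. by move=> kN; rewrite -gridN; exact: grid_le. Qed.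

Lemma gridS k : grid k.+1 = grid k + 1 / N%:R.
Proof. by rewrite /grid -[(k.+1)%:R]natr1 mulrDl mul1r. Qed.

Lemma exists_grid_piece t : 0 <= t ->
  exists k, [/\ (k < N)%N, grid k <= t & ((k.+1 < N)%N -> t < grid k.+1)].
Proof.
move=> t0.
have ex : exists k, (k < N)%N && (grid k <= t) by exists 0%N; rewrite grid0 t0.
have bnd k : (k < N)%N && (grid k <= t) -> (k <= N)%N by case/andP => /ltnW.
case: (ex_maxnP ex bnd) => k /andP[kN kt] kmax.
exists k; split => // k1N; rewrite ltNge; apply/negP => ht.
by have := kmax k.+1; rewrite k1N ht => /(_ isT); rewrite ltnn.
Qed.

Lemma step_fun_on tau k t : (k < N)%N -> grid k <= t ->
  ((k.+1 < N)%N -> t < grid k.+1) -> step_fun tau t = step_value tau k.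
Proof.
move=> kN kt tk; rewrite /step_fun (big_cat_nat (leq0n k) (kN : (k <= Np)%N)) /=.
rewrite [X in _ + (_ + X)]big1_seq ?addr0; last first.
  move=> j /andP[_]; rewrite mem_index_iota => /andP[kj jNp].
  have : t < grid j.+1 by apply: (lt_le_trans (tk (leq_ltn_trans kj jNp))); exact: grid_le.
  by rewrite ltNge => /negbTE ->; rewrite mul0r.
rewrite (eq_big_nat _ _ (F2 := fun j => step_value tau j.+1 - step_value tau j)).
  by rewrite telescope_sumr // addrC subrK.
move=> j /andP[_ jk]; have -> : grid j.+1 <= t by apply: le_trans kt; exact: grid_le.
by rewrite mul1r.
Qed.

Lemma step_value_bound tau k : `|step_value tau k| <= 4.
Proof. rewrite /step_value ler_norml; case: (tau k); case: (odd k); apply/andP; split; lra. Qed.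

Lemma step_fun_bound tau t : 0 <= t -> `|step_fun tau t| <= 4.
Proof.
by move=> /exists_grid_piece[k [kN kt tk]]; rewrite (step_fun_on _ kN kt tk) step_value_bound.
Qed.

Lemma step_value_neq tau k : step_value tau k != step_value tau k.+1.
Proof.
rewrite /step_value /=; case: (odd k); case: (tau k); case: (tau k.+1) => /=;
  apply/negP => /eqP; lra.
Qed.

Lemma norm_step_value_diff tau tau' k : tau k != tau' k ->
  `|step_value tau k - step_value tau' k| = 2.
Proof.
have -> : step_value tau k - step_value tau' k =
    (if tau k then 1 else -1) - (if tau' k then 1 else -1) by rewrite /step_value; ring.
by case: (tau k); case: (tau' k) => //= _; [rewrite ger0_norm | rewrite ler0_norm]; lra.
Qed.

Lemma step_fun_agree tau tau' m s : (forall j, (j < m)%N -> tau j = tau' j) ->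
  0 <= s -> s < grid m -> step_fun tau s = step_fun tau' s.
Proof.
move=> ag /exists_grid_piece[p [pN ps sp]] sm.
rewrite (step_fun_on _ pN ps sp) (step_fun_on _ pN ps sp).
have pm : (p < m)%N.
  rewrite ltnNge; apply/negP => mp.
  by have := le_lt_trans (le_trans (grid_le mp) ps) sm; rewrite ltxx.
by rewrite /step_value ag.
Qed.

Lemma measurable_step_fun tau : measurable_fun setT (step_fun tau).
Proof.
apply: measurable_funD; first exact: measurable_cst.
apply: measurable_sum => j; apply: measurable_funM; last exact: measurable_cst.
have -> : (fun t => (grid j.+1 <= t)%R%:R) = (\1_`[grid j.+1, +oo[ : R -> R).
  apply/funext => t; rewrite indicE.
  have -> : (t \in `[grid j.+1, +oo[%classic) = (grid j.+1 <= t) => //.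
  apply/idP/idP => [/set_mem|h]; first by rewrite /= in_itv /= andbT.
  by apply/mem_set; rewrite /= in_itv /= h.
exact: measurable_indic.
Qed.

Lemma control_coord_bound tau s i : 0 <= s -> `|control tau s ord0 i| <= `|c| * 4.
Proof.
move=> s0; rewrite /control !mxE /= normrM normrM -[X in _ <= X]mulr1.
apply: ler_pM => //; first by apply: ler_wpM2l => //; exact: step_fun_bound.
by case: (_ == _); rewrite ?normr1 ?normr0.
Qed.

Lemma enorm_control_le tau t : 0 <= c -> 0 <= t -> enorm (control tau t) <= 4 * c.
Proof.
move=> c0 t0; rewrite enorm_scale_delta normrM ger0_norm // mulrC.
by apply: ler_wpM2r => //; exact: step_fun_bound.
Qed.

Lemma integrable_control_coord tau i t :
  mu.-integrable `[0, t] (EFin \o (fun s => control tau s ord0 i)).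
Proof.
apply: measurable_bounded_integrable => //; first exact: lebesgue_itv_cc_lty.
- have -> : (fun s => control tau s ord0 i) = (fun s => c * step_fun tau s * (i == i0)%:R).
    by apply/funext => s; rewrite /control !mxE.
  apply: measurable_funS (@subsetT _ _) _ => //.
  by apply: measurable_funM => //; apply: measurable_funM => //; exact: measurable_step_fun.
- rewrite /bounded_near; near=> M => s /= As.
  apply: (le_trans (control_coord_bound tau i _)); first by move: As; rewrite in_itv /= => /andP[].
  by near: M; exact: nbhs_pinfty_ge.
Unshelve. all: by end_near.
Qed.

Lemma Rintegral_control_diff tau tau' k t : (forall j, (j < k)%N -> tau j = tau' j) ->
  (k < N)%N -> grid k <= t < grid k.+1 -> forall i,
  Rintegral mu `[0, t] (fun s => control tau s ord0 i) -
  Rintegral mu `[0, t] (fun s => control tau' s ord0 i)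
  = c * (step_value tau k - step_value tau' k) * (i == i0)%:R * (t - grid k).
Proof.
move=> ag kN /andP[kt tk] i.
rewrite -RintegralB //; [|exact: integrable_control_coord|exact: integrable_control_coord].
rewrite (@Rintegral_itv_cc_split_co _ _ 0 (grid k) t); last 2 first.
- by rewrite grid_ge0 kt.
- by apply: integrable_subr => //; exact: integrable_control_coord.
rewrite (@eq_Rintegral _ _ _ mu `[0, grid k[ (fun _ => 0)); last first.
  move=> r; rewrite inE /= in_itv /= => /andP[r0 rk].
  by rewrite /control (step_fun_agree ag r0 rk) subrr.
rewrite Rintegral_cst // mul0r add0r -Rintegral_cst_itv_cc //.
apply: eq_Rintegral => r; rewrite inE /= in_itv /= => /andP[kr rt].
rewrite /control !mxE !(step_fun_on _ kN kr (fun _ => le_lt_trans rt tk)); ring.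
Qed.

Lemma l1_Rintegral_control_diff tau tau' k t : (forall j, (j < k)%N -> tau j = tau' j) ->
  (k < N)%N -> grid k <= t < grid k.+1 ->
  \sum_i `|Rintegral mu `[0, t] (fun s => control tau s ord0 i) -
           Rintegral mu `[0, t] (fun s => control tau' s ord0 i)|
  = `|c * (step_value tau k - step_value tau' k)| * (t - grid k).
Proof.
move=> ag kN kt; rewrite (bigD1 i0) //= big1 ?addr0; last first.
  by move=> j /negbTE ji; rewrite (Rintegral_control_diff ag kN kt) ji mulr0 mul0r normr0.
rewrite (Rintegral_control_diff ag kN kt) eqxx mulr1 normrM [`|t - _|]ger0_norm //.
by rewrite subr_ge0; case/andP: kt.
Qed.

Lemma l1_Rintegral_control_diff_le tau tau' k t : 0 <= c ->
  (forall j, (j < k)%N -> tau j = tau' j) -> (k < N)%N -> grid k <= t < grid k.+1 ->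
  \sum_i `|Rintegral mu `[0, t] (fun s => control tau s ord0 i) -
           Rintegral mu `[0, t] (fun s => control tau' s ord0 i)| <= 2 * c * (1 / N%:R).
Proof.
move=> c0 ag kN kt; rewrite (l1_Rintegral_control_diff ag kN kt).
have hd : `|step_value tau k - step_value tau' k| <= 2.
  case: (eqVneq (tau k) (tau' k)) => [e|ne]; last by rewrite norm_step_value_diff.
  by rewrite /step_value e subrr normr0.
rewrite normrM ger0_norm // [2 * c]mulrC.
case/andP: kt => kt; rewrite gridS => tk.
apply: ler_pM; rewrite ?mulr_ge0 ?subr_ge0 //; first exact: ler_wpM2l.
by rewrite lerBlDl ltW.
Qed.

Lemma grid_points : 0 :: rcons grid_jumps 1 = [seq grid j | j <- iota 0 N.+1].
Proof.
have -> : iota 0 N.+1 = 0%N :: rcons (iota 1 Np) N.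
  have iotaSr m k : iota m k.+1 = rcons (iota m k) (m + k) by rewrite -addn1 iotaD cats1.
  by rewrite -[iota 0 _]/(0%N :: iota 1 N) iotaSr.
by rewrite map_cons map_rcons grid0 gridN.
Qed.

Lemma nth_grid_points i : (i <= N)%N -> nth 0 (0 :: rcons grid_jumps 1) i = grid i.
Proof. by move=> iN; rewrite grid_points (nth_map 0%N) ?size_iota ?nth_iota. Qed.

Lemma size_grid_jumps : size grid_jumps = Np.
Proof. by rewrite size_map size_iota. Qed.

Lemma control_piecewise_constant tau : c != 0 -> piecewise_constant (control tau) grid_jumps.
Proof.
move=> c0; split; [|split; [|split]].
- rewrite grid_points sorted_map; apply: sub_sorted (iota_ltn_sorted 0 _) => j k /=.
  exact: grid_lt.
- move=> i; rewrite size_grid_jumps => iNp t.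
  have iN : (i < N)%N by apply: (ltn_trans iNp).
  rewrite !nth_grid_points ?(ltnW iN) // => /andP[it ti].
  by rewrite /control (step_fun_on _ iN it (fun _ => ti)) (step_fun_on _ iN (lexx _) (fun _ => grid_lt (ltnSn i))).
- have -> : last 0 (0 :: grid_jumps) = grid Np.
    rewrite -nth_last /= size_grid_jumps.
    have := nth_grid_points (leqnSn Np).
    by rewrite -[0 :: rcons grid_jumps 1]/(rcons (0 :: grid_jumps) 1) nth_rcons /= size_grid_jumps ltnSn.
  move=> t /andP[tl t1].
  by rewrite /control !(@step_fun_on _ Np) //= ltnn.
- move=> i; rewrite size_grid_jumps => iNp.
  have iN : (i < N)%N by apply: (ltn_trans iNp).
  rewrite !nth_grid_points ?(ltnW iN) //.
  rewrite /control (step_fun_on _ iN (lexx _) (fun _ => grid_lt (ltnSn i))).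
  rewrite (step_fun_on _ (iNp : (i.+1 < N)%N) (lexx _) (fun _ => grid_lt (ltnSn i.+1))).
  apply/negP => /eqP h; have := congr1 (fun M : 'rV[R]_n => M ord0 i0) h.
  rewrite !mxE /= eqxx !mulr1 => /(mulfI c0) /eqP.
  by apply/negP; exact: step_value_neq.
Qed.

Variables (b : 'rV[R]_n -> 'rV[R]_n) (L : R).
Hypothesis hL : forall x y, enorm (b x - b y) <= L * enorm (x - y).
Variables (x0 : 'rV[R]_n) (sigma : R -> 'rV[R]_n).
Hypothesis hK : n%:R * `|L| * (1 / N%:R) <= 1 / 4.

Let hK2 : n%:R * `|L| * (1 / N%:R) <= 1 / 2.
Proof. by apply: (le_trans hK); lra. Qed.

Let hLh : `|L| * (1 / N%:R) <= 1 / 4.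
Proof.
apply: le_trans hK; rewrite -mulrA ler_peMl ?mulr_ge0 ?divr_ge0 //.
by rewrite ler1n; case: i0 => i /(leq_ltn_trans (leq0n i)).
Qed.

Lemma solutions_agree_before_grid tau tau' k x y : (k <= N)%N ->
  (forall j, (j < k)%N -> tau j = tau' j) ->
  solves b x0 sigma (control tau) x -> solves b x0 sigma (control tau') y ->
  forall s, 0 <= s -> s < grid k -> x s = y s.
Proof.
elim: k => [|k IH] kN ag sx sy s s0 sk.
  by move: sk; rewrite grid0 => /(le_lt_trans s0); rewrite ltxx.
have agk j : (j < k)%N -> tau j = tau' j by move=> jk; apply: ag; exact: ltnW.
have IH' : forall s, 0 <= s -> s < grid k -> x s = y s by apply: IH => //; exact: ltnW.
case: (ltP s (grid k)) => [|ks]; first exact: IH'.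
have hv t : grid k <= t < grid k + 1 / N%:R -> t <= 1 ->
    \sum_i `|Rintegral mu `[0, t] (fun s => control tau s ord0 i) -
              Rintegral mu `[0, t] (fun s => control tau' s ord0 i)| <= 0.
  move=> ht _; rewrite -gridS in ht.
  rewrite (l1_Rintegral_control_diff agk kN ht).
  have -> : step_value tau k = step_value tau' k by rewrite /step_value ag.
  by rewrite subrr mulr0 normr0 mul0r.
have hsk : grid k <= s < grid k + 1 / N%:R by rewrite ks -gridS.
have hs1 : s <= 1 by apply: ltW; apply: (lt_le_trans sk); exact: grid_le1.
have := solutions_close_on_window hL sx sy hK2 (grid_ge0 k) (lexx 0) IH' hv hsk hs1.
by rewrite mulr0 => /eq_row_of_sum_dist_le0.
Qed.

Lemma drift_diff_le tau tau' k x y : 0 <= c -> (k < N)%N ->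
  (forall j, (j < k)%N -> tau j = tau' j) ->
  solves b x0 sigma (control tau) x -> solves b x0 sigma (control tau') y ->
  forall t, grid k <= t < grid k.+1 ->
  `|Rintegral mu `[0, t] (fun s => b (x s) ord0 i0 - b (y s) ord0 i0)| <= c * (t - grid k).
Proof.
move=> c0 kN ag sx sy t /andP[kt tk].
pose h : R := 1 / N%:R.
have hah : grid k.+1 = grid k + h := gridS k.
have t1 : t <= 1 by apply: ltW; apply: (lt_le_trans tk); exact: grid_le1.
have hxy := solutions_agree_before_grid (ltnW kN) ag sx sy.
have hv s : grid k <= s < grid k + h -> s <= 1 ->
    \sum_i `|Rintegral mu `[0, s] (fun r => control tau r ord0 i) -
              Rintegral mu `[0, s] (fun r => control tau' r ord0 i)| <= 2 * c * h.
  by move=> hs _; rewrite -hah in hs; exact: (l1_Rintegral_control_diff_le c0 ag kN hs).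
have V0 : 0 <= 2 * c * h by rewrite !mulr_ge0 ?divr_ge0.
have hD := solutions_close_on_window hL sx sy hK2 (grid_ge0 k) V0 hxy hv.
have hdrift : mu.-integrable `[0, 1] (EFin \o (fun s => b (x s) ord0 i0 - b (y s) ord0 i0)).
  apply: integrable_subr => //.
  - by move: (integrable_solution_drift hL sx i0).
  - by move: (integrable_solution_drift hL sy i0).
apply: (le_trans (norm_Rintegral_vanishing_before (a := grid k) (C := `|L| * (2 * (2 * c * h))) _ _ _ _)).
- by rewrite kt grid_ge0.
- by apply: integrable_itv_sub01 hdrift; rewrite t1 (le_trans (grid_ge0 k) kt).
- by move=> s s0 sa; rewrite hxy // subrr.
- move=> s /andP[sa st]; apply: (le_trans (lipschitz_coord_l1 hL (x s) (y s) i0)).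
  apply: ler_wpM2l => //; apply: le_trans (hD s _ (le_trans st t1)).
    by apply: ler_sum => j _; rewrite !mxE.
  by rewrite sa (le_lt_trans st) // -hah.
- rewrite ler_wpM2r ?subr_ge0 //.
  have -> : `|L| * (2 * (2 * c * h)) = 4 * c * (`|L| * h) by ring.
  by apply: (le_trans (ler_wpM2l _ hLh)); rewrite ?mulr_ge0 //; lra.
Qed.

Variable Rbar : R.
Hypotheses (hc : 0 < c) (hR : 0 < Rbar).

Definition delay := 3 * Rbar / c.

Lemma delay_ge0 : 0 <= delay.
Proof. by rewrite divr_ge0 ?mulr_ge0 // ltW. Qed.

Lemma solutions_separate tau tau' k x y : (k < N)%N ->
  (forall j, (j < k)%N -> tau j = tau' j) -> tau k != tau' k ->
  solves b x0 sigma (control tau) x -> solves b x0 sigma (control tau') y ->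
  forall t, grid k + delay <= t < grid k.+1 ->
  2 * Rbar < `|x t ord0 i0| + `|y t ord0 i0|.
Proof.
move=> kN ag nk sx sy t /andP[kbt tk].
have kt : grid k <= t by apply: le_trans kbt; rewrite lerDl delay_ge0.
have t01 : 0 <= t <= 1.
  by rewrite (le_trans (grid_ge0 k) kt) (ltW (lt_le_trans tk (grid_le1 kN))).
have ktk : grid k <= t < grid k.+1 by rewrite kt tk.
set G := Rintegral mu `[0, t] (fun s => b (x s) ord0 i0 - b (y s) ord0 i0).
set d := c * (step_value tau k - step_value tau' k).
have Exy : x t ord0 i0 - y t ord0 i0 = G + d * (t - grid k).
  by rewrite (solution_coord_diff hL sx sy i0 t01) (Rintegral_control_diff ag kN ktk) eqxx mulr1.
have hG : `|G| <= c * (t - grid k) := drift_diff_le (ltW hc) kN ag sx sy ktk.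
have hd : `|d * (t - grid k)| = c * 2 * (t - grid k).
  rewrite normrM /d normrM norm_step_value_diff // gtr0_norm //.
  by rewrite [`|t - _|]ger0_norm // subr_ge0.
have hc3 : 3 * Rbar <= c * (t - grid k).
  have h3 : 3 * Rbar / c <= t - grid k by move: kbt; rewrite /delay; lra.
  by have := ler_wpM2r (ltW hc) h3; rewrite divfK ?gt_eqF // [c * _]mulrC.
have hdG : `|d * (t - grid k)| <= `|x t ord0 i0 - y t ord0 i0| + `|G|.
  have -> : d * (t - grid k) = x t ord0 i0 - y t ord0 i0 - G by rewrite Exy; ring.
  exact: ler_normB.
have := ler_normB (x t ord0 i0) (y t ord0 i0).
by move: hdG hR; rewrite hd; lra.
Qed.

Definition exit_window (x : R -> 'rV[R]_n) (j : nat) : set R :=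
  [set t | (grid j + delay <= t < grid j.+1) /\ Rbar < `|x t ord0 i0|].

Lemma measurable_exit_window (x : R -> 'rV[R]_n) j : {within `[0, 1], continuous x} -> (j < N)%N ->
  measurable (exit_window x j).
Proof.
move=> hx jN; apply: measurable_coord_exit => //; last exact: grid_le1.
by rewrite addr_ge0 ?grid_ge0 ?delay_ge0.
Qed.

Lemma exit_window_agree tau tau' k x y : (k < N)%N ->
  (forall j, (j < k.+1)%N -> tau j = tau' j) ->
  solves b x0 sigma (control tau) x -> solves b x0 sigma (control tau') y ->
  exit_window x k = exit_window y k.
Proof.
move=> kN ag sx sy; have hxy := solutions_agree_before_grid kN ag sx sy.
apply/seteqP; split => t /= [/andP[kt tk] h]; split; rewrite ?kt ?tk //.
- by rewrite -hxy // (le_trans _ kt) // addr_ge0 ?grid_ge0 ?delay_ge0.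
- by rewrite hxy // (le_trans _ kt) // addr_ge0 ?grid_ge0 ?delay_ge0.
Qed.

Lemma exit_window_choice tau1 tau2 k x1 x2 : (k < N)%N ->
  (forall j, (j < k)%N -> tau1 j = tau2 j) -> tau1 k != tau2 k ->
  solves b x0 sigma (control tau1) x1 -> solves b x0 sigma (control tau2) x2 ->
  (((1 / N%:R - delay) / 2)%:E <= mu (exit_window x1 k))%E \/
  (((1 / N%:R - delay) / 2)%:E <= mu (exit_window x2 k))%E.
Proof.
move=> kN ag nk s1 s2.
have m1 := measurable_exit_window s1.1 kN; have m2 := measurable_exit_window s2.1 kN.
have hsub : `[grid k + delay, grid k.+1[ `<=` exit_window x1 k `|` exit_window x2 k.
  move=> t /=; rewrite in_itv /= => /andP[kt tk].
  have := solutions_separate kN ag nk s1 s2 (t := t); rewrite kt tk => /(_ isT).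
  case: (ltP Rbar `|x1 t ord0 i0|) => h1; first by left; split; rewrite ?kt ?tk.
  case: (ltP Rbar `|x2 t ord0 i0|) => h2; first by right; split; rewrite ?kt ?tk.
  by move: h1 h2; lra.
have hJ : ((1 / N%:R - delay)%:E <= mu `[(grid k + delay)%R, grid k.+1[)%E.
  rewrite lebesgue_measure_itv /= lte_fin gridS; set hN := 1 / N%:R.
  by case: ltP => h; rewrite ?(-EFinB) lee_fin; lra.
have hU : (mu `[(grid k + delay)%R, grid k.+1[ <= mu (exit_window x1 k) + mu (exit_window x2 k))%E.
  apply: le_trans (measureU2 mu m1 m2).
  by apply: le_measure => //; rewrite inE //; exact: measurableU.
case: (pselect (((1 / N%:R - delay) / 2)%:E <= mu (exit_window x1 k))%E) => H1; first by left.
case: (pselect (((1 / N%:R - delay) / 2)%:E <= mu (exit_window x2 k))%E) => H2; first by right.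
move/negP: H1; rewrite -ltNge => H1; move/negP: H2; rewrite -ltNge => H2.
have := le_lt_trans (le_trans hJ hU) (lteD H1 H2).
by rewrite -EFinD -splitr ltxx.
Qed.

Lemma greedy_signs (X : (nat -> bool) -> R -> 'rV[R]_n) :
  (forall tau, solves b x0 sigma (control tau) (X tau)) ->
  forall k, (k <= N)%N -> exists tau, forall tau', (forall j, (j < k)%N -> tau' j = tau j) ->
    ((k%:R * ((1 / N%:R - delay) / 2))%:E <= \sum_(j < k) mu (exit_window (X tau') j))%E.
Proof.
move=> hX; elim => [|k IH] kN.
  by exists (fun _ => true) => tau' _; rewrite big_ord0 mul0r.
have [tau Htau] := IH (ltnW kN).
pose tb (bb : bool) j := if j == k then bb else tau j.
have agb bb j : (j < k)%N -> tb bb j = tau j by move=> jk; rewrite /tb (ltn_eqF jk).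
set q := (1 / N%:R - delay) / 2.
have extend bb : (q%:E <= mu (exit_window (X (tb bb)) k))%E ->
    exists tau0, forall tau', (forall j, (j < k.+1)%N -> tau' j = tau0 j) ->
    ((k.+1%:R * q)%:E <= \sum_(j < k.+1) mu (exit_window (X tau') j))%E.
  move=> Hb; exists (tb bb) => tau' ag'.
  rewrite big_ord_recr /= -natr1 mulrDl [1 * q]mul1r EFinD.
  rewrite (exit_window_agree kN ag' (hX _) (hX _)).
  apply: leeD => //; apply: Htau => j jk.
  by rewrite ag' ?agb // (ltn_trans jk).
have ag j : (j < k)%N -> tb true j = tb false j by move=> jk; rewrite !agb.
have nk : tb true k != tb false k by rewrite /tb eqxx.
by case: (exit_window_choice kN ag nk (hX _) (hX _)) => /extend.
Qed.

Lemma trivIset_exit_window x : trivIset `I_N (exit_window x).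
Proof.
apply/trivIsetP => i j _ _ ij; apply/seteqP; split => // t /= [[/andP[it ti] _] [/andP[jt tj] _]].
have := delay_ge0.
by case: (ltngtP i j) => h; [have := grid_le h | have := grid_le h | by rewrite h eqxx in ij];
  move: it ti jt tj; lra.
Qed.

(* Solutions are not assumed unique, so argue by contradiction with a bad
   solution chosen for every sign sequence. *)
Lemma exists_control_exit_time : exists tau, forall x, solves b x0 sigma (control tau) x ->
  ((N%:R * ((1 / N%:R - delay) / 2))%:E <= mu (exit_set Rbar x))%E.
Proof.
apply: contrapT => /forallNP H.
have H' tau : exists x, solves b x0 sigma (control tau) x /\
    ~ ((N%:R * ((1 / N%:R - delay) / 2))%:E <= mu (exit_set Rbar x))%E.
  by have /existsNP[x /not_implyP hx] := H tau; exists x.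
have [X HX] := choice H'.
have [tau Ht] := greedy_signs (fun tau => (HX tau).1) (leqnn N).
have hx := (HX tau).1; apply: (HX tau).2; apply: le_trans (Ht tau (fun _ _ => erefl)) _.
have mw j : (j < N)%N -> measurable (exit_window (X tau) j) := measurable_exit_window hx.1.
have mU : measurable (\big[setU/set0]_(j < N) exit_window (X tau) j).
  by apply: bigsetU_measurable => j _; exact: mw.
rewrite -measure_semi_additive_ord_I //; last exact: trivIset_exit_window.
apply: le_measure; rewrite ?inE //; first exact: measurable_exit_set hx.1.
rewrite -bigcup_mkord => t [j /= jN [/andP[jt tj] h]]; split.
- rewrite (le_trans _ jt) ?addr_ge0 ?grid_ge0 ?delay_ge0 //=.
  by apply: ltW; apply: (lt_le_trans tj); exact: grid_le1.
- exact: (lt_le_trans h (coord_le_enorm _ _)).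
Qed.

End BangBang.

Lemma exists_fine_grid (R : archiRealFieldType) (P : R) : 0 <= P ->
  exists Np : nat, P * (1 / Np.+1%:R) <= 1 / 4.
Proof.
move=> P0; pose Np := Num.Def.archi_bound (4 * P).
have hNp : 4 * P < Np%:R by apply: archi_boundP; rewrite mulr_ge0.
exists Np; rewrite -(@ler_pM2l _ (4 * Np.+1%:R)) ?mulr_gt0 ?ltr0n //.
have -> : 4 * Np.+1%:R * (P * (1 / Np.+1%:R)) = 4 * P by field; rewrite nat1r pnatr_eq0.
have -> : 4 * Np.+1%:R * (1 / 4) = Np.+1%:R :> R by field.
by apply: ltW; apply: (lt_le_trans hNp); rewrite ler_nat.
Qed.

Unset Implicit Arguments.

Theorem proposition3p9 (R : realType) (n : nat) (hn : (0 < n)%N)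
  (b : 'rV[R]_n -> 'rV[R]_n) (kappa R0 lambda : R)
  (hkappa : 0 < kappa) (hR0 : 0 <= R0) (hlambda : 0 <= lambda)
  (hb : in_S kappa R0 lambda b)
  (eta Rbar : R) (heta : eta < 1 / 2) (hRbar : 0 < Rbar) :
  exists M : R, 0 < M /\
    forall (sigma : R -> 'rV[R]_n) (x0 : 'rV[R]_n),
      {within `[0, 1], continuous sigma} -> sigma 0 = 0 ->
      exists (u : R -> 'rV[R]_n) (s : seq R) (c : R),
        piecewise_constant u s /\ 0 <= c /\
        (forall t, 0 <= t <= 1 -> enorm (u t) <= c) /\
        c + (size s)%:R <= M /\
        (forall x : R -> 'rV[R]_n, solves b x0 sigma u x ->
           (eta%:E <= (@lebesgue_measure R)
                        [set t : R | ((0 <= t <= 1) /\ (Rbar < enorm (x t)))%R])%E).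
Proof.
move: hb => [[L hL] _].
have [Np hK] := exists_fine_grid (mulr_ge0 (ler0n R n) (normr_ge0 L)).
have th0 : 0 < 1 - 2 * eta by lra.
pose c := 3 * Rbar * Np.+1%:R / (1 - 2 * eta).
have c0 : 0 < c by rewrite /c !mulr_gt0 ?invr_gt0 ?ltr0n.
exists (4 * c + Np%:R); split; first by apply: ltr_pwDl; [rewrite mulr_gt0 | rewrite ler0n].
move=> sigma x0 _ _.
have [tau Htau] := exists_control_exit_time (Ordinal hn) hL x0 sigma hK c0 hRbar.
exists (control (Ordinal hn) Np c tau), (grid_jumps R Np), (4 * c).
split; first by apply: control_piecewise_constant; rewrite gt_eqF.
split; first by rewrite mulr_ge0 // ltW.
split; first by move=> t /andP[t0 _]; apply: enorm_control_le => //; exact: ltW.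
split; first by rewrite size_grid_jumps.
move=> x /Htau; suff -> : Np.+1%:R * ((1 / Np.+1%:R - delay c Rbar) / 2) = eta by [].
rewrite /delay /c; field.
by rewrite nat1r pnatr_eq0 (lt0r_neq0 th0) (lt0r_neq0 hRbar).
Qed.
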